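(* Let $\beta\in(0,1)$, $T\ge1$, and $\mathbf{x}_0,\mathbf{x}_1,\dots,\mathbf{x}_T\in\mathbb{R}^d$. For $n\in[T]$ let $q_{n,s}:=\beta^{n-s}\frac{1-\beta}{1-\beta^n}$ ($s=1,\dots,n$), let $\mathbf{X}_n$ be the random vector equal to $\mathbf{x}_s$ with probability $q_{n,s}$, and $\overline{\mathbf{x}}_n:=\mathbb{E}[\mathbf{X}_n]$. Let $\tau\in[T]$ be random with $\Pr(\tau=t)=\frac{1-\beta^t}{T}$ for $t\le T-1$ and $\Pr(\tau=T)=\frac{1-\beta^T}{(1-\beta)T}$. Then $$\mathbb{E}_\tau\mathbb{E}_{\mathbf{X}_\tau}\|\mathbf{X}_\tau-\overline{\mathbf{x}}_\tau\|^2\le\frac{2\beta}{(1-\beta)^2T}\sum_{n=1}^T\|\mathbf{x}_n-\mathbf{x}_{n-1}\|^2.$$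
   Context: Norms are Euclidean. *)

From mathcomp Require Import all_boot all_order all_algebra.
From mathcomp Require Import reals.
Set Implicit Arguments. Unset Strict Implicit. Unset Printing Implicit Defensive.
Import Order.TTheory GRing.Theory Num.Theory.
Local Open Scope ring_scope.

Definition sqnorm (R : realType) (d : nat) (v : 'rV[R]_d) : R :=
  \sum_(i < d) v 0 i ^+ 2.

Definition qw (R : realType) (beta : R) (n s : nat) : R :=
  beta ^+ (n - s) * (1 - beta) / (1 - beta ^+ n).

Definition xbar (R : realType) (d : nat) (beta : R) (x : nat -> 'rV[R]_d)
  (n : nat) : 'rV[R]_d :=
  \sum_(1 <= s < n.+1) qw beta n s *: x s.

Definition var_n (R : realType) (d : nat) (beta : R) (x : nat -> 'rV[R]_d)
  (n : nat) : R :=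
  \sum_(1 <= s < n.+1) qw beta n s * sqnorm (x s - xbar beta x n).

Definition ptau (R : realType) (beta : R) (T t : nat) : R :=
  if (t < T)%N then (1 - beta ^+ t) / T%:R
  else (1 - beta ^+ T) / ((1 - beta) * T%:R).

From mathcomp Require Import all_boot all_order all_algebra.
From mathcomp Require Import reals.
From mathcomp Require Import ring lra.
Import Order.TTheory GRing.Theory Num.Theory.
Set Implicit Arguments. Unset Strict Implicit. Unset Printing Implicit Defensive.
Local Open Scope ring_scope.

(* Argue coordinatewise on a real sequence y. With the exponential weights
   beta^(t-s) (1 <= s <= t), total weight W_t, weighted mean m_t and scatter
   M_t = sum_s beta^(t-s) (y_s - m_t)^2, one has q_{t,s} = beta^(t-s) / W_t, so
   the variance at time t is M_t / W_t, while Pr(tau = t) / W_t is (1-beta)/T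
   for t < T and 1/T for t = T: the left-hand side is
   ((1-beta) sum_(t<T) M_t + M_T) / T.
   Steiner's shift formula gives M_(t+1) = beta M_t + g_t (y_(t+1) - m_t)^2 and
   y_(t+1) - m_(t+1) = g_t (y_(t+1) - m_t), with gain g_t = 1 - 1/W_(t+1) in
   [0, beta]. Hence the potential
     (1-beta) sum_(s<t) M_s + M_t + 2beta/(1-beta) (y_t - m_t)^2,
   which vanishes at t = 1, increases by at most
   2beta/(1-beta)^2 (y_(t+1) - y_t)^2 per step. *)

Lemma weighted_sqr_dev_shift (R : comPzRingType) (I : Type) (r : seq I)
    (w y : I -> R) (m c : R) :
  \sum_(i <- r) w i * y i = m * \sum_(i <- r) w i ->
  \sum_(i <- r) w i * (y i - c) ^+ 2
  = \sum_(i <- r) w i * (y i - m) ^+ 2 + (\sum_(i <- r) w i) * (m - c) ^+ 2.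
Proof.
move=> mean_m.
have split_sqr i : w i * (y i - c) ^+ 2
    = w i * (y i - m) ^+ 2 + 2 * (m - c) * (w i * y i - m * w i) + w i * (m - c) ^+ 2.
  by ring.
rewrite (eq_bigr _ (fun i _ => split_sqr i)) !big_split /=.
rewrite -mulr_sumr sumrB -mulr_sumr mean_m subrr mulr0 addr0.
by rewrite -mulr_suml mulrC.
Qed.

Lemma sqr_add_le (R : realDomainType) (c u v : R) :
  c * (u + v) ^+ 2 <= (1 + c) * (u ^+ 2 + c * v ^+ 2).
Proof.
rewrite -subr_ge0.
have -> : (1 + c) * (u ^+ 2 + c * v ^+ 2) - c * (u + v) ^+ 2 = (u - c * v) ^+ 2 by ring.
exact: sqr_ge0.
Qed.

Lemma sqr_add_scaled_le (R : realFieldType) (b u v : R) : 0 <= b -> b <= 1 ->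
  (1 - b) * (1 - b + 2 * b ^+ 2) * (u + v) ^+ 2 <= 2 * (u ^+ 2 + (1 - b) * v ^+ 2).
Proof.
move=> b_ge0 b_le1.
have coef_ge0 : 0 <= 1 - b + 2 * b ^+ 2 by rewrite addr_ge0 ?mulr_ge0 ?sqr_ge0 ?subr_ge0.
have coef_le : (1 - b + 2 * b ^+ 2) * (1 + (1 - b)) <= 2.
  have : 0 <= b * (1 - b) * (3 - 2 * b) by rewrite !mulr_ge0 //; lra.
  nra.
rewrite [(1 - b) * _]mulrC -mulrA.
apply: le_trans (ler_wpM2l coef_ge0 (sqr_add_le _ _ _)) _.
rewrite mulrA ler_wpM2r //.
by apply: addr_ge0 (sqr_ge0 u) (mulr_ge0 _ (sqr_ge0 v)); rewrite subr_ge0.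
Qed.

Lemma gain_quadratic_le (R : realFieldType) (b g u v : R) :
  0 < b -> b < 1 -> 0 <= g -> g <= b ->
  (g + 2 * b / (1 - b) * g ^+ 2) * (u + v) ^+ 2
  <= 2 * b / (1 - b) ^+ 2 * u ^+ 2 + 2 * b / (1 - b) * v ^+ 2.
Proof.
move=> b_gt0 b_lt1 g_ge0 g_le_b.
have c_gt0 : 0 < 1 - b by rewrite subr_gt0.
have coef_le : g + 2 * b / (1 - b) * g ^+ 2 <= b + 2 * b / (1 - b) * b ^+ 2.
  apply: lerD => //; apply: ler_wpM2l; first by rewrite divr_ge0; lra.
  by rewrite ler_pXn2r ?nnegrE // ltW.
apply: le_trans (ler_wpM2r (sqr_ge0 (u + v)) coef_le) _.
have -> : (b + 2 * b / (1 - b) * b ^+ 2) * (u + v) ^+ 2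
        = b / (1 - b) ^+ 2 * ((1 - b) * (1 - b + 2 * b ^+ 2) * (u + v) ^+ 2).
  by field; lra.
have -> : 2 * b / (1 - b) ^+ 2 * u ^+ 2 + 2 * b / (1 - b) * v ^+ 2
        = b / (1 - b) ^+ 2 * (2 * (u ^+ 2 + (1 - b) * v ^+ 2)).
  by field; lra.
have scale_ge0 : 0 <= b / (1 - b) ^+ 2 by rewrite divr_ge0 ?exprn_ge0 ?ltW.
rewrite ler_wpM2l //.
exact: sqr_add_scaled_le (ltW b_gt0) (ltW b_lt1).
Qed.

Section ExponentialAverage.
Variables (R : realFieldType) (b : R).
Hypotheses (b_gt0 : 0 < b) (b_lt1 : b < 1).

Definition ema (F : nat -> R) (t : nat) : R :=
  \sum_(1 <= s < t.+1) b ^+ (t - s) * F s.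

Definition ema_weight (t : nat) : R := ema (fun=> 1) t.

Definition ema_mean (y : nat -> R) (t : nat) : R := ema y t / ema_weight t.

Definition ema_scatter (y : nat -> R) (t : nat) : R :=
  ema (fun s => (y s - ema_mean y t) ^+ 2) t.

Definition ema_gain (t : nat) : R := 1 - (ema_weight t.+1)^-1.

Lemma ema0 (F : nat -> R) : ema F 0 = 0.
Proof. by rewrite /ema big_geq. Qed.

Lemma emaS (F : nat -> R) (t : nat) : ema F t.+1 = b * ema F t + F t.+1.
Proof.
rewrite /ema big_nat_recr //= subnn expr0 mul1r; congr (_ + _).
rewrite mulr_sumr; apply: eq_big_nat => s /andP[_ s_le_t].
by rewrite subSn // exprS mulrA.
Qed.

Lemma ema_weight_closed (t : nat) : (1 - b) * ema_weight t = 1 - b ^+ t.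
Proof.
elim: t => [|t IH]; first by rewrite /ema_weight ema0 expr0; ring.
rewrite /ema_weight emaS -/(ema_weight t) exprS.
transitivity (b * ((1 - b) * ema_weight t) + (1 - b)); first ring.
by rewrite IH; ring.
Qed.

Lemma ema_weightS (t : nat) : ema_weight t.+1 = b * ema_weight t + 1.
Proof. exact: emaS. Qed.

Lemma ema_weight_ge0 (t : nat) : 0 <= ema_weight t.
Proof.
have c_gt0 : 0 < 1 - b by rewrite subr_gt0.
rewrite -(pmulr_rge0 _ c_gt0) ema_weight_closed subr_ge0.
by rewrite exprn_ile1 // ltW.
Qed.

Lemma ema_weightS_ge1 (t : nat) : 1 <= ema_weight t.+1.
Proof. by rewrite ema_weightS lerDr mulr_ge0 ?ema_weight_ge0 // ltW. Qed.

Lemma ema_weight_gt0 (t : nat) : (0 < t)%N -> 0 < ema_weight t.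
Proof. by case: t => // t _; apply: lt_le_trans ltr01 (ema_weightS_ge1 t). Qed.

Lemma ema_mean_mul (y : nat -> R) (t : nat) : ema_mean y t * ema_weight t = ema y t.
Proof.
case: t => [|t]; first by rewrite /ema_mean /ema_weight !ema0 mulr0.
by rewrite /ema_mean divfK // lt0r_neq0 // ema_weight_gt0.
Qed.

Lemma ema_sqr_dev_shift (y : nat -> R) (t : nat) (c : R) :
  ema (fun s => (y s - c) ^+ 2) t
  = ema_scatter y t + ema_weight t * (ema_mean y t - c) ^+ 2.
Proof.
have weight_sum : ema_weight t = \sum_(1 <= s < t.+1) b ^+ (t - s).
  by apply: eq_bigr => s _; rewrite mulr1.
rewrite /ema_scatter /ema weight_sum; apply: weighted_sqr_dev_shift.
by rewrite -weight_sum ema_mean_mul.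
Qed.

Lemma ema_meanS (y : nat -> R) (t : nat) :
  ema_mean y t.+1 = (b * ema_weight t * ema_mean y t + y t.+1) / ema_weight t.+1.
Proof. by rewrite {1}/ema_mean emaS -ema_mean_mul [ema_mean y t * _]mulrC mulrA. Qed.

Lemma ema_residS (y : nat -> R) (t : nat) :
  y t.+1 - ema_mean y t.+1 = ema_gain t * (y t.+1 - ema_mean y t).
Proof.
have := ema_weight_gt0 (ltn0Sn t); rewrite ema_meanS /ema_gain ema_weightS => W_gt0.
by field; rewrite lt0r_neq0.
Qed.

Lemma ema_scatterS (y : nat -> R) (t : nat) :
  ema_scatter y t.+1
  = b * ema_scatter y t + ema_gain t * (y t.+1 - ema_mean y t) ^+ 2.
Proof.
have := ema_weight_gt0 (ltn0Sn t); rewrite ema_weightS => W_gt0.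
rewrite {1}/ema_scatter emaS ema_sqr_dev_shift ema_meanS /ema_gain ema_weightS.
by field; rewrite lt0r_neq0.
Qed.

Lemma ema_gain_ge0 (t : nat) : 0 <= ema_gain t.
Proof. by rewrite subr_ge0 invf_le1 ?ema_weightS_ge1 // ema_weight_gt0. Qed.

Lemma ema_gain_le (t : nat) : ema_gain t <= b.
Proof.
have W_gt0 := ema_weight_gt0 (ltn0Sn t).
rewrite /ema_gain lerBlDr -lerBlDl -(ler_pM2r W_gt0) mulVf ?gt_eqF //.
by rewrite ema_weight_closed gerBl exprn_ge0 // ltW.
Qed.

Lemma ema_gain0 : ema_gain 0 = 0.
Proof. by rewrite /ema_gain ema_weightS /ema_weight ema0 mulr0 add0r invr1 subrr. Qed.

Definition ema_potential (y : nat -> R) (t : nat) : R :=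
  (1 - b) * \sum_(1 <= s < t) ema_scatter y s + ema_scatter y t
  + 2 * b / (1 - b) * (y t - ema_mean y t) ^+ 2.

Lemma ema_potential1 (y : nat -> R) : ema_potential y 1 = 0.
Proof.
rewrite /ema_potential big_geq // ema_scatterS ema_residS ema_gain0.
by rewrite /ema_scatter ema0 !mul0r !mulr0 expr0n /= mulr0 !addr0.
Qed.

Lemma ema_potentialS (y : nat -> R) (t : nat) : (0 < t)%N ->
  ema_potential y t.+1
  <= ema_potential y t + 2 * b / (1 - b) ^+ 2 * (y t.+1 - y t) ^+ 2.
Proof.
move=> t_gt0; rewrite /ema_potential big_nat_recr //= ema_scatterS ema_residS.
have := gain_quadratic_le (y t.+1 - y t) (y t - ema_mean y t) b_gt0 b_lt1
  (ema_gain_ge0 t) (ema_gain_le t).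
rewrite (_ : y t.+1 - y t + (y t - ema_mean y t) = y t.+1 - ema_mean y t); last by ring.
lra.
Qed.

Lemma ema_potential_le (y : nat -> R) (T : nat) : (0 < T)%N ->
  ema_potential y T
  <= 2 * b / (1 - b) ^+ 2 * \sum_(1 <= n < T.+1) (y n - y n.-1) ^+ 2.
Proof.
elim: T => // -[_ _ | T IH _].
  have K_ge0 : 0 <= 2 * b / (1 - b) ^+ 2.
    by rewrite divr_ge0 ?exprn_ge0 ?mulr_ge0 ?subr_ge0 ?ltW.
  rewrite ema_potential1 mulr_ge0 //.
  by apply: sumr_ge0 => n _; exact: sqr_ge0.
apply: le_trans (ema_potentialS y (ltn0Sn T)) _.
by rewrite [in leRHS]big_nat_recr //= mulrDr lerD2r IH.
Qed.

Lemma ema_scatter_avg_le (y : nat -> R) (T : nat) : (0 < T)%N ->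
  (1 - b) * \sum_(1 <= t < T) ema_scatter y t + ema_scatter y T
  <= 2 * b / (1 - b) ^+ 2 * \sum_(1 <= n < T.+1) (y n - y n.-1) ^+ 2.
Proof.
move=> T_gt0; apply: le_trans (ema_potential_le y T_gt0).
rewrite /ema_potential lerDl; apply: mulr_ge0 (sqr_ge0 _).
by rewrite divr_ge0 ?mulr_ge0 ?subr_ge0 ?ltW.
Qed.

End ExponentialAverage.

Section Reduction.
Variables (R : realType) (beta : R).
Hypotheses (beta_gt0 : 0 < beta) (beta_lt1 : beta < 1).

Lemma qw_ema (t s : nat) : (0 < t)%N ->
  qw beta t s = beta ^+ (t - s) / ema_weight beta t.
Proof.
move=> t_gt0; have W_gt0 := ema_weight_gt0 beta_gt0 beta_lt1 t_gt0.
rewrite /qw -ema_weight_closed.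
by field; rewrite lt0r_neq0 // subr_eq0 gt_eqF.
Qed.

Lemma xbar_coord (d : nat) (x : nat -> 'rV[R]_d) (t : nat) (i : 'I_d) : (0 < t)%N ->
  xbar beta x t 0 i = ema_mean beta (fun s => x s 0 i) t.
Proof.
move=> t_gt0; rewrite /xbar summxE /ema_mean /ema mulr_suml.
by apply: eq_bigr => s _; rewrite mxE qw_ema // mulrAC.
Qed.

Lemma var_n_coord (d : nat) (x : nat -> 'rV[R]_d) (t : nat) : (0 < t)%N ->
  var_n beta x t
  = \sum_(i < d) ema_scatter beta (fun s => x s 0 i) t / ema_weight beta t.
Proof.
move=> t_gt0; rewrite /var_n /sqnorm.
under eq_bigr do rewrite mulr_sumr.
rewrite exchange_big; apply: eq_bigr => i _.
rewrite /ema_scatter /ema mulr_suml; apply: eq_bigr => s _.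
by rewrite !mxE xbar_coord // qw_ema // mulrAC.
Qed.

Lemma ptau_weighted_sum (f : nat -> R) (T : nat) : (0 < T)%N ->
  \sum_(1 <= t < T.+1) ptau beta T t / ema_weight beta t * f t
  = ((1 - beta) * \sum_(1 <= t < T) f t + f T) / T%:R.
Proof.
move=> T_gt0; have T_neq0 : T%:R != 0 :> R by rewrite pnatr_eq0 -lt0n.
have one_sub_neq0 : 1 - beta != 0 by rewrite subr_eq0 gt_eqF.
rewrite big_nat_recr //= mulrDl mulr_sumr mulr_suml; congr (_ + _).
  apply: eq_big_nat => t /andP[t_gt0 t_lt_T].
  rewrite /ptau t_lt_T -ema_weight_closed.
  by field; rewrite T_neq0 lt0r_neq0 ?ema_weight_gt0.
rewrite /ptau ltnn -ema_weight_closed.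
by field; rewrite T_neq0 one_sub_neq0 lt0r_neq0 ?ema_weight_gt0.
Qed.

End Reduction.

Theorem lemma7 (R : realType) (d : nat) (beta : R) (T : nat)
  (x : nat -> 'rV[R]_d) :
  0 < beta -> beta < 1 -> (1 <= T)%N ->
  \sum_(1 <= t < T.+1) ptau beta T t * var_n beta x t
  <= (2 * beta) / ((1 - beta) ^+ 2 * T%:R)
     * \sum_(1 <= n < T.+1) sqnorm (x n - x n.-1).
Proof.
move=> beta_gt0 beta_lt1 T_gt0.
pose y (i : 'I_d) n := x n 0 i.
have lhsE : \sum_(1 <= t < T.+1) ptau beta T t * var_n beta x t
    = \sum_(i < d) ((1 - beta) * \sum_(1 <= t < T) ema_scatter beta (y i) t
                    + ema_scatter beta (y i) T) / T%:R.
  transitivity (\sum_(i < d) \sum_(1 <= t < T.+1)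
                 ptau beta T t / ema_weight beta t * ema_scatter beta (y i) t).
    rewrite exchange_big; apply: eq_big_nat => t /andP[t_gt0 _].
    rewrite var_n_coord // mulr_sumr; apply: eq_bigr => i _.
    by rewrite mulrA mulrAC.
  by apply: eq_bigr => i _; rewrite ptau_weighted_sum.
have rhsE : \sum_(1 <= n < T.+1) sqnorm (x n - x n.-1)
    = \sum_(i < d) \sum_(1 <= n < T.+1) (y i n - y i n.-1) ^+ 2.
  rewrite exchange_big; apply: eq_bigr => n _; apply: eq_bigr => i _.
  by rewrite !mxE.
rewrite lhsE rhsE mulr_sumr; apply: ler_sum => i _.
rewrite invfM mulrA mulrAC ler_pM2r ?invr_gt0 ?ltr0n //.
exact: ema_scatter_avg_le.
Qed.
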